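(* Let $(a_n)_{n\ge1}$ be a sequence of positive real numbers with $\sum_n a_n=\infty$, and let $(m_n)_{n\ge1}$ be a sequence of positive integers such that for every $n\ge2$: $m_n>m_{n-1}$ and $1000\cdot4^{-m_n}\le a_n4^{-m_{n-1}}$. Then for Lebesgue-almost every $t\in[0,1]$ there are infinitely many $n$ such that $\operatorname{dist}(t,4^{-m_n}\mathbb{N})\le 4^{-m_n}a_n$.
   Context: $4^{-m}\mathbb{N}=\{4^{-m}k:k\in\mathbb{N}\}$. *)

From Stdlib Require Import Reals.
Open Scope R_scope.

Definition lebesgue_null (N : R -> Prop) : Prop :=
  forall eps : R, 0 < eps ->
    exists a b : nat -> R,
      (forall k, a k <= b k) /\
      (forall x, N x -> exists k, a k < x < b k) /\
      (forall n, sum_f_R0 (fun k => b k - a k) n <= eps).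

(* dist(t, 4^{-m} N) <= r, with N = {0,1,2,...}; the distance to this discrete
   closed set is attained, so it is <= r iff some point lies within r. *)
Definition dist_grid_le (t : R) (m : nat) (r : R) : Prop :=
  exists k : nat, Rabs (t - INR k * (/ 4) ^ m) <= r.

From Stdlib Require Import Reals Lra Lia List Bool ZArith Classical ClassicalEpsilon.
Open Scope R_scope.

(* Fix N and let X_N be the set of points of [0,1) lying in no target
   [q 4^-m_n, q 4^-m_n + 4^-m_n a_n] with n >= N; the exceptional set is the
   union of the X_N (the point 1 is a grid point), so each X_N must be shown to
   have content zero.  Round a_n down to a power b_n = 4^-k_n <= min(a_n, 1) and
   call level n active when m_n + k_n <= m_(n+1).  The targets of an active level
   then remove exactly the fraction b_n of the cells of mesh 4^-m_(n+1), so
   counting the surviving cells covers X_N by grid cells of total length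
   prod_(active n) (1 - b_n).  For an inactive level the gap condition forces
   b_n <= b_(n+1) / 16, hence the active b_n still have a divergent sum and the
   product tends to 0. *)

(** * Finite interval covers *)

Definition total_length (l : list (R * R)) : R :=
  fold_right (fun p s => snd p - fst p + s) 0 l.

Lemma total_length_app l1 l2 :
  total_length (l1 ++ l2) = total_length l1 + total_length l2.
Proof. induction l1 as [|p l1 IH]; simpl; [lra | rewrite IH; lra]. Qed.

Lemma total_length_nonneg l :
  (forall p, In p l -> fst p <= snd p) -> 0 <= total_length l.
Proof.
  induction l as [|p l IH]; intros Hl; simpl; [lra|].
  assert (fst p <= snd p) by (apply Hl; left; reflexivity).
  assert (0 <= total_length l) by (apply IH; intros q Hq; apply Hl; right; exact Hq).
  lra.
Qed.

Lemma sum_length_nth_le (l : list (R * R)) n :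
  (forall p, In p l -> fst p <= snd p) ->
  sum_f_R0 (fun k => snd (nth k l (0, 0)) - fst (nth k l (0, 0))) n
    <= total_length l.
Proof.
  revert n; induction l as [|p l IH]; intros n Hl.
  - rewrite (sum_eq _ (fun _ => 0)) by (intros [|k] _; simpl; lra).
    rewrite sum_cte; simpl; lra.
  - assert (Hp : fst p <= snd p) by (apply Hl; left; reflexivity).
    assert (Hl' : forall q, In q l -> fst q <= snd q)
      by (intros q Hq; apply Hl; right; exact Hq).
    destruct n as [|n].
    + simpl. pose proof (total_length_nonneg l Hl'). lra.
    + rewrite decomp_sum by lia. simpl. specialize (IH n Hl'). lra.
Qed.

Definition content_zero (X : R -> Prop) : Prop :=
  forall eps, 0 < eps -> exists l : list (R * R),
    (forall p, In p l -> fst p <= snd p) /\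
    total_length l <= eps /\
    (forall x, X x -> exists p, In p l /\ fst p < x < snd p).

Section Concatenation.

Variable fam : nat -> list (R * R).

(* Each block is padded with the empty interval (0,0), so the first [n] blocks
   contain at least [n] intervals. *)
Fixpoint blocks (n : nat) : list (R * R) :=
  match n with
  | O => nil
  | S n => blocks n ++ (0, 0) :: fam n
  end.

Lemma length_blocks n : (n <= length (blocks n))%nat.
Proof. induction n; simpl; [lia|]. rewrite length_app; simpl; lia. Qed.

Lemma blocks_prefix i j : (i <= j)%nat -> exists l, blocks j = blocks i ++ l.
Proof.
  induction 1 as [|j _ [l Hl]]; [exists nil; rewrite app_nil_r; reflexivity|].
  exists (l ++ (0, 0) :: fam j). simpl. rewrite Hl, app_assoc. reflexivity.
Qed.

Lemma nth_blocks_le i j k : (i <= j)%nat -> (k < length (blocks i))%nat ->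
  nth k (blocks j) (0, 0) = nth k (blocks i) (0, 0).
Proof.
  intros Hij Hk. destruct (blocks_prefix i j Hij) as [l ->]. apply app_nth1, Hk.
Qed.

Lemma in_fam_blocks N p : In p (fam N) -> In p (blocks (S N)).
Proof. intros Hp. simpl. apply in_or_app. right. right. exact Hp. Qed.

Lemma in_blocks n p : In p (blocks n) -> p = (0, 0) \/ exists N, In p (fam N).
Proof.
  induction n as [|n IH]; simpl; [tauto|].
  intros Hp. apply in_app_or in Hp as [Hp | [Hp | Hp]]; eauto.
Qed.

Lemma total_length_blocks n :
  total_length (blocks (S n)) = sum_f_R0 (fun N => total_length (fam N)) n.
Proof.
  induction n as [|n IH].
  - simpl. lra.
  - change (blocks (S (S n))) with (blocks (S n) ++ (0, 0) :: fam (S n)).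
    rewrite total_length_app, IH. simpl. lra.
Qed.

Lemma nth_blocks_diag k n : (k < length (blocks (S n)))%nat ->
  nth k (blocks (S k)) (0, 0) = nth k (blocks (S n)) (0, 0).
Proof.
  intros Hk. destruct (Compare_dec.le_lt_dec k n) as [Hkn | Hnk].
  - symmetry. apply nth_blocks_le; [lia|]. pose proof (length_blocks (S k)). lia.
  - apply nth_blocks_le; [lia | exact Hk].
Qed.

End Concatenation.

Lemma sum_geometric_half_le eps n : 0 <= eps ->
  sum_f_R0 (fun N => eps * (/ 2) ^ S N) n <= eps.
Proof.
  intros Heps.
  rewrite (sum_eq _ (fun N => (/ 2) ^ N * (eps / 2))) by (intros; simpl; field).
  rewrite <- scal_sum, tech3 by lra.
  assert (0 < (/ 2) ^ S n) by (apply pow_lt; lra).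
  replace (eps / 2 * ((1 - (/ 2) ^ S n) / (1 - / 2))) with (eps - eps * (/ 2) ^ S n)
    by field.
  assert (0 <= eps * (/ 2) ^ S n) by (apply Rmult_le_pos; lra).
  lra.
Qed.

Lemma lebesgue_null_of_content_zero_cover (X : nat -> R -> Prop) (Y : R -> Prop) :
  (forall N, content_zero (X N)) -> (forall y, Y y -> exists N, X N y) ->
  lebesgue_null Y.
Proof.
  intros HX HY eps Heps.
  assert (Hpos : forall N, 0 < eps * (/ 2) ^ S N)
    by (intros; apply Rmult_lt_0_compat; [lra | apply pow_lt; lra]).
  set (fam N := proj1_sig (constructive_indefinite_description _ (HX N _ (Hpos N)))).
  assert (Hfam : forall N,
    (forall p, In p (fam N) -> fst p <= snd p) /\
    total_length (fam N) <= eps * (/ 2) ^ S N /\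
    (forall x, X N x -> exists p, In p (fam N) /\ fst p < x < snd p))
    by (intros N; exact (proj2_sig (constructive_indefinite_description _ (HX N _ (Hpos N))))).
  assert (Hord : forall n p, In p (blocks fam n) -> fst p <= snd p).
  { intros n p Hp. destruct (in_blocks fam n p Hp) as [-> | [N HN]];
      [simpl; lra | exact (proj1 (Hfam N) p HN)]. }
  set (I k := nth k (blocks fam (S k)) (0, 0)).
  exists (fun k => fst (I k)), (fun k => snd (I k)). split; [|split].
  - intros k. apply (Hord (S k)), nth_In. pose proof (length_blocks fam (S k)). lia.
  - intros y Hy. destruct (HY y Hy) as [N HN].
    destruct (proj2 (proj2 (Hfam N)) y HN) as [p [Hp Hyp]].
    destruct (In_nth _ _ (0, 0) (in_fam_blocks fam N p Hp)) as [k [Hk Hkp]].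
    exists k. unfold I. rewrite (nth_blocks_diag fam k N Hk), Hkp. exact Hyp.
  - intros n.
    rewrite (sum_eq _ (fun k => snd (nth k (blocks fam (S n)) (0, 0))
                                - fst (nth k (blocks fam (S n)) (0, 0)))).
    2:{ intros k Hk. unfold I. rewrite (nth_blocks_diag fam k n); [reflexivity|].
        pose proof (length_blocks fam (S n)). lia. }
    eapply Rle_trans; [apply sum_length_nth_le, Hord|].
    rewrite total_length_blocks.
    eapply Rle_trans; [apply sum_Rle; intros N _; apply (proj1 (proj2 (Hfam N)))|].
    apply sum_geometric_half_le. lra.
Qed.

(** * Counting below a bound *)

Definition count_below (P : nat -> bool) (n : nat) : nat :=
  length (filter P (seq 0 n)).

Lemma count_below_S P n :
  count_below P (S n) = (count_below P n + if P n then 1 else 0)%nat.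
Proof.
  unfold count_below. rewrite seq_S, filter_app, length_app. simpl.
  destruct (P n); reflexivity.
Qed.

Lemma count_below_ext P Q n : (forall i, (i < n)%nat -> P i = Q i) ->
  count_below P n = count_below Q n.
Proof.
  intros H. unfold count_below. f_equal. apply filter_ext_in.
  intros i Hi. apply in_seq in Hi. apply H. lia.
Qed.

Lemma count_below_le P n : (count_below P n <= n)%nat.
Proof. induction n; [reflexivity|]. rewrite count_below_S. destruct (P n); lia. Qed.

Lemma count_below_true n : count_below (fun _ => true) n = n.
Proof. induction n; [reflexivity|]. rewrite count_below_S. lia. Qed.

Lemma count_below_false n : count_below (fun _ => false) n = O.
Proof. induction n; [reflexivity|]. rewrite count_below_S. lia. Qed.

Lemma count_below_geb c n : (c <= n)%nat ->
  count_below (fun r => (c <=? r)%nat) n = (n - c)%nat.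
Proof.
  induction n as [|n IH]; intros Hc; [reflexivity|]. rewrite count_below_S.
  destruct (Nat.eq_dec c (S n)) as [-> | Hne].
  - rewrite (count_below_ext _ (fun _ => false)).
    + rewrite count_below_false. destruct (Nat.leb_spec (S n) n); lia.
    + intros i Hi. apply Nat.leb_gt. lia.
  - rewrite IH by lia. destruct (Nat.leb_spec c n); lia.
Qed.

Lemma count_below_add P x y : count_below P (x + y) =
  (count_below P x + count_below (fun i => P (x + i)%nat) y)%nat.
Proof.
  induction y as [|y IH]; [rewrite Nat.add_0_r; symmetry; apply Nat.add_0_r|].
  rewrite Nat.add_succ_r, !count_below_S, IH. lia.
Qed.

Lemma count_below_div_mod P Q X Y : (Y <> 0)%nat ->
  count_below (fun j => P (j / Y)%nat && Q (j mod Y)%nat)%bool (X * Y)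
  = (count_below P X * count_below Q Y)%nat.
Proof.
  intros HY. induction X as [|X IH]; [reflexivity|].
  replace (S X * Y)%nat with (X * Y + Y)%nat by lia.
  rewrite count_below_add, IH, count_below_S.
  assert (Hblock : count_below (fun r => P ((X * Y + r) / Y)%nat && Q ((X * Y + r) mod Y)%nat) Y
                   = count_below (fun r => P X && Q r) Y).
  { apply count_below_ext. intros r Hr.
    rewrite Nat.add_comm, Nat.div_add, Nat.Div0.mod_add,
      Nat.div_small, Nat.mod_small by lia. reflexivity. }
  rewrite Hblock. destruct (P X); simpl.
  - change (count_below (fun r => Q r) Y) with (count_below Q Y). lia.
  - rewrite count_below_false. lia.
Qed.

(** * Divergent series and products *)

Lemma prod_one_minus_mul_one_plus_sum_le (x : nat -> R) n :
  (forall i, 0 <= x i <= 1) ->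
  prod_f_R0 (fun i => 1 - x i) n * (1 + sum_f_R0 x n) <= 1.
Proof.
  intros Hx. induction n as [|n IH]; simpl.
  - specialize (Hx O). nra.
  - set (P := prod_f_R0 (fun i => 1 - x i) n).
    assert (HP : 0 <= P) by (apply prod_SO_pos; intros i _; specialize (Hx i); lra).
    assert (0 <= sum_f_R0 x n) by (apply cond_pos_sum; intros i; apply Hx).
    specialize (Hx (S n)).
    assert (0 <= P * x (S n) * (sum_f_R0 x n + x (S n))).
    { apply Rmult_le_pos; [apply Rmult_le_pos|]; lra. }
    replace (P * (1 - x (S n)) * (1 + (sum_f_R0 x n + x (S n))))
      with (P * (1 + sum_f_R0 x n) - P * x (S n) * (sum_f_R0 x n + x (S n))) by ring.
    fold P in IH. lra.
Qed.

Lemma prod_one_minus_small (x : nat -> R) :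
  (forall i, 0 <= x i <= 1) -> cv_infty (sum_f_R0 x) ->
  forall eps, 0 < eps -> exists n, prod_f_R0 (fun i => 1 - x i) n <= eps.
Proof.
  intros Hx Hdiv eps Heps. destruct (Hdiv (/ eps)) as [n Hn]. exists n.
  specialize (Hn n (le_n n)).
  assert (0 < / eps) by (apply Rinv_0_lt_compat, Heps).
  pose proof (prod_one_minus_mul_one_plus_sum_le x n Hx) as Hle.
  assert (0 <= prod_f_R0 (fun i => 1 - x i) n)
    by (apply prod_SO_pos; intros i _; specialize (Hx i); lra).
  apply Rmult_le_reg_r with (1 + sum_f_R0 x n); [lra|].
  eapply Rle_trans; [exact Hle|].
  assert (eps * / eps < eps * sum_f_R0 x n) by (apply Rmult_lt_compat_l; assumption).
  assert (eps * / eps = 1) by (field; lra).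
  rewrite Rmult_plus_distr_l, Rmult_1_r. lra.
Qed.

Lemma cv_infty_sum_le (f g : nat -> R) c : 0 < c -> (forall n, c * f n <= g n) ->
  cv_infty (sum_f_R0 f) -> cv_infty (sum_f_R0 g).
Proof.
  intros Hc Hfg Hf M. destruct (Hf (M / c)) as [N HN]. exists N. intros n Hn.
  specialize (HN n Hn).
  apply Rlt_le_trans with (c * sum_f_R0 f n).
  - apply Rmult_lt_compat_l with (r := c) in HN; [|exact Hc].
    replace (c * (M / c)) with M in HN by (field; lra). exact HN.
  - rewrite scal_sum. apply sum_Rle. intros i _. rewrite Rmult_comm. apply Hfg.
Qed.

Lemma cv_infty_sum_eventually_eq (f g : nat -> R) N :
  (forall n, (N <= n)%nat -> f n = g n) ->
  cv_infty (sum_f_R0 f) -> cv_infty (sum_f_R0 g).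
Proof.
  intros Hfg Hf M.
  destruct (Hf (M + sum_f_R0 f N - sum_f_R0 g N)) as [K HK].
  exists (max K N). intros n Hn.
  assert (Hdiff : forall n, (N <= n)%nat ->
    sum_f_R0 g n - sum_f_R0 f n = sum_f_R0 g N - sum_f_R0 f N).
  { clear n Hn. induction 1 as [|n Hn IH]; [reflexivity|].
    simpl. rewrite (Hfg (S n)) by lia. rewrite <- IH. ring. }
  specialize (HK n ltac:(lia)). specialize (Hdiff n ltac:(lia)). lra.
Qed.

Lemma sum_f_R0_le_mono (f : nat -> R) i j : (forall n, 0 <= f n) -> (i <= j)%nat ->
  sum_f_R0 f i <= sum_f_R0 f j.
Proof.
  intros Hf. induction 1 as [|j _ IH]; [lra|]. simpl. specialize (Hf (S j)). lra.
Qed.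

Lemma cv_infty_sum_min_one (x : nat -> R) : (forall n, 0 <= x n) ->
  cv_infty (sum_f_R0 x) -> cv_infty (sum_f_R0 (fun n => Rmin (x n) 1)).
Proof.
  intros Hx Hdiv.
  destruct (classic (exists N, forall n, (N <= n)%nat -> x n < 1)) as [[N HN] | Hbig].
  - apply (cv_infty_sum_eventually_eq x _ N); [|exact Hdiv].
    intros n Hn. symmetry. apply Rmin_left. left. apply HN, Hn.
  - assert (Hio : forall N, exists n, (N <= n)%nat /\ 1 <= x n).
    { intros N. apply NNPP. intros Hno. apply Hbig. exists N. intros n Hn.
      apply Rnot_le_lt. intros H1. apply Hno. exists n. split; assumption. }
    set (y n := Rmin (x n) 1).
    assert (Hy : forall n, 0 <= y n) by (intros n; unfold y; apply Rmin_glb; [apply Hx | lra]).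
    assert (Hk : forall k, exists n, INR k <= sum_f_R0 y n).
    { induction k as [|k [n Hn]].
      - exists O. simpl. apply Hy.
      - destruct (Hio (S n)) as [n' [Hn' H1]]. exists n'.
        assert (Hy1 : y n' = 1) by (apply Rmin_right, H1).
        rewrite S_INR. destruct n' as [|n']; [lia|]. simpl. rewrite Hy1.
        pose proof (sum_f_R0_le_mono y n n' Hy ltac:(lia)). lra. }
    intros M. destruct (INR_unbounded M) as [k Hk']. destruct (Hk k) as [N HN].
    exists N. intros n Hn. pose proof (sum_f_R0_le_mono y N n Hy Hn). fold y. lra.
Qed.

Lemma cv_infty_sum_of_shift_bound (u s : nat -> R) c B :
  0 <= c < 1 -> (forall n, 0 <= u n <= B) -> (forall n, u n <= s n + c * u (S n)) ->
  cv_infty (sum_f_R0 u) -> cv_infty (sum_f_R0 s).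
Proof.
  intros Hc Hu Hus Hdiv.
  assert (Hsum : forall n, sum_f_R0 u n <= sum_f_R0 s n + c * (sum_f_R0 u n + u (S n))).
  { induction n as [|n IH]; simpl.
    - specialize (Hus O). specialize (Hu O). nra.
    - specialize (Hus (S n)). lra. }
  intros M. destruct (Hdiv ((M + c * B) / (1 - c))) as [N HN]. exists N. intros n Hn.
  specialize (HN n Hn). specialize (Hsum n). destruct (Hu (S n)) as [_ HB].
  assert (Hlow : M + c * B < (1 - c) * sum_f_R0 u n).
  { apply Rmult_lt_compat_l with (r := 1 - c) in HN; [|lra].
    replace ((1 - c) * ((M + c * B) / (1 - c))) with (M + c * B) in HN by (field; lra).
    exact HN. }
  nra.
Qed.

(** * Quaternary grids *)

Lemma INR_pow4 n : INR (4 ^ n)%nat = 4 ^ n.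
Proof. rewrite pow_INR. replace (INR 4) with 4 by (simpl; lra). reflexivity. Qed.

Lemma pow4_mul_quarter n : 4 ^ n * (/ 4) ^ n = 1.
Proof. rewrite <- Rpow_mult_distr, Rinv_r, pow1 by lra. reflexivity. Qed.

Lemma quarter_pow_le i j : (i <= j)%nat -> (/ 4) ^ j <= (/ 4) ^ i.
Proof.
  intros Hij. replace j with (i + (j - i))%nat by lia. rewrite pow_add.
  assert (0 < (/ 4) ^ i) by (apply pow_lt; lra).
  assert ((/ 4) ^ (j - i) <= 1) by (induction (j - i)%nat; simpl; lra).
  assert (0 < (/ 4) ^ (j - i)) by (apply pow_lt; lra).
  nra.
Qed.

Lemma floor_exists x : 0 <= x -> exists j : nat, INR j <= x < INR j + 1.
Proof.
  intros Hx. destruct (archimed x) as [Hup1 Hup2].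
  assert (Hz : (0 < up x)%Z) by (apply lt_IZR; lra).
  exists (Z.to_nat (up x - 1)).
  rewrite INR_IZR_INZ, Z2Nat.id, minus_IZR by lia. simpl. lra.
Qed.

Lemma floor_div_mod (Y j : nat) x : (0 < Y)%nat ->
  INR j <= INR Y * x < INR j + 1 ->
  INR (j / Y) <= x < INR (j / Y) + 1 /\
  (x - INR (j / Y)) * INR Y < INR (j mod Y) + 1.
Proof.
  intros HY Hj.
  assert (Hdec : INR j = INR Y * INR (j / Y) + INR (j mod Y))
    by (rewrite <- mult_INR, <- plus_INR, <- Nat.div_mod_eq; reflexivity).
  assert (Hr : INR (j mod Y) + 1 <= INR Y)
    by (rewrite <- S_INR; apply le_INR, Nat.mod_upper_bound; lia).
  assert (HYpos : 0 < INR Y) by (apply lt_0_INR, HY).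
  pose proof (pos_INR (j mod Y)).
  split; [split|].
  - apply Rmult_le_reg_l with (INR Y); [exact HYpos | lra].
  - apply Rmult_lt_reg_l with (INR Y); [exact HYpos | lra].
  - lra.
Qed.

Lemma grid_cells_cover (X : R -> Prop) (Y : nat) (G : nat -> bool) delta :
  (0 < Y)%nat -> 0 < delta ->
  (forall t, X t -> 0 <= t < 1) ->
  (forall t j, X t -> INR j <= INR Y * t < INR j + 1 -> G j = true) ->
  exists l : list (R * R),
    (forall p, In p l -> fst p <= snd p) /\
    total_length l = INR (count_below G Y) * (/ INR Y + 2 * delta) /\
    (forall t, X t -> exists p, In p l /\ fst p < t < snd p).
Proof.
  intros HY Hdelta HX HG.
  assert (HYpos : 0 < INR Y) by (apply lt_0_INR, HY).
  set (cell j := (INR j / INR Y - delta, (INR j + 1) / INR Y + delta)).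
  exists (map cell (filter G (seq 0 Y))). split; [|split].
  - intros p Hp. apply in_map_iff in Hp as [j [<- _]]. unfold cell; simpl.
    assert (INR j / INR Y <= (INR j + 1) / INR Y)
      by (apply Rmult_le_compat_r; [left; apply Rinv_0_lt_compat |]; lra).
    lra.
  - unfold count_below. induction (filter G (seq 0 Y)) as [|j l IH]; simpl; [lra|].
    rewrite IH. destruct (length l); [simpl|rewrite S_INR]; unfold cell; simpl; field; lra.
  - intros t Ht. destruct (HX t Ht) as [Ht0 Ht1].
    destruct (floor_exists (INR Y * t)) as [j Hj]; [nra|].
    exists (cell j). split.
    + apply in_map, filter_In. split; [apply in_seq | exact (HG t j Ht Hj)].
      split; [lia|]. simpl. apply INR_lt. nra.
    + unfold cell; simpl.
      assert (INR j / INR Y <= t)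
        by (apply Rmult_le_reg_l with (INR Y); [lra|]; field_simplify; lra).
      assert (t < (INR j + 1) / INR Y)
        by (apply Rmult_lt_reg_l with (INR Y); [lra|]; field_simplify; lra).
      lra.
Qed.

Lemma quarter_power_below x : 0 < x ->
  exists k, (/ 4) ^ k <= x /\ (k = O \/ x < 4 * (/ 4) ^ k).
Proof.
  intros Hx.
  destruct (pow_lt_1_zero (/ 4) ltac:(rewrite Rabs_pos_eq; lra) x Hx) as [K HK].
  specialize (HK K (le_n K)). rewrite Rabs_pos_eq in HK by (apply pow_le; lra).
  apply Rlt_le in HK. clear Hx. induction K as [|K IH].
  - exists O. split; [lra | left; reflexivity].
  - destruct (Rle_lt_dec ((/ 4) ^ K) x) as [Hle | Hlt]; [apply IH, Hle|].
    exists (S K). split; [lra|]. right. simpl. lra.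
Qed.

Lemma lt_quarter_pow_of_mul x k C : 0 < C -> x * (4 ^ k * C) < C -> x < (/ 4) ^ k.
Proof.
  intros HC Hx.
  assert (Hx1 : x * 4 ^ k < 1)
    by (apply Rmult_lt_reg_r with C; [exact HC | rewrite Rmult_assoc; lra]).
  assert (Hpow : 0 < (/ 4) ^ k) by (apply pow_lt; lra).
  rewrite <- (Rmult_1_r x), <- (pow4_mul_quarter k), <- Rmult_assoc.
  rewrite <- (Rmult_1_l ((/ 4) ^ k)) at 2.
  apply Rmult_lt_compat_r; assumption.
Qed.

Lemma dist_grid_le_of_cell L t (q : nat) r : 0 <= 4 ^ L * t - INR q <= r ->
  dist_grid_le t L ((/ 4) ^ L * r).
Proof.
  intros Hq. exists q.
  assert (Hpos : 0 < (/ 4) ^ L) by (apply pow_lt; lra).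
  replace (t - INR q * (/ 4) ^ L) with ((4 ^ L * t - INR q) * (/ 4) ^ L)
    by (transitivity (t * (4 ^ L * (/ 4) ^ L) - INR q * (/ 4) ^ L);
        [| rewrite pow4_mul_quarter]; ring).
  rewrite Rabs_mult, Rabs_pos_eq, Rabs_pos_eq by lra.
  rewrite Rmult_comm. apply Rmult_le_compat_l; lra.
Qed.

(** * The exceptional set *)

Section Targets.

Variables (a : nat -> R) (m : nat -> nat).
Hypothesis a_pos : forall i, 0 < a i.
Hypothesis m_lt : forall i, (m i < m (S i))%nat.
Hypothesis m_gap : forall i, 1000 * (/ 4) ^ m (S i) <= a (S i) * (/ 4) ^ m i.
Hypothesis a_div : cv_infty (sum_f_R0 a).

(* [scale i] is the largest power of 1/4 below [Rmin (a i) 1]. *)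
Definition depth i : nat :=
  proj1_sig (constructive_indefinite_description _ (quarter_power_below (a i) (a_pos i))).

Definition scale i : R := (/ 4) ^ depth i.

Lemma scale_spec i : scale i <= a i /\ (depth i = O \/ a i < 4 * scale i).
Proof. unfold scale, depth. apply proj2_sig. Qed.

Lemma scale_pos i : 0 < scale i.
Proof. apply pow_lt. lra. Qed.

Lemma scale_le_1 i : scale i <= 1.
Proof. apply (quarter_pow_le O). lia. Qed.

Lemma sum_scale_diverges : cv_infty (sum_f_R0 scale).
Proof.
  apply (cv_infty_sum_le (fun i => Rmin (a i) 1) scale (/ 4)); [lra | |].
  - intros i. destruct (scale_spec i) as [_ [Hd | Ha]].
    + unfold scale. rewrite Hd. pose proof (Rmin_r (a i) 1). simpl. lra.
    + pose proof (Rmin_l (a i) 1). lra.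
  - apply cv_infty_sum_min_one; [intros i; left; apply a_pos | exact a_div].
Qed.

Lemma scale_le_next i : (m (S i) < m i + depth i)%nat -> scale i <= scale (S i) / 16.
Proof.
  intros Hlt. set (d := (m (S i) - m i)%nat).
  assert (Hd1 : (1 <= d)%nat) by (pose proof (m_lt i); unfold d; lia).
  assert (Hi : scale i <= (/ 4) ^ d / 4).
  { replace ((/ 4) ^ d / 4) with ((/ 4) ^ S d) by (simpl; field).
    apply quarter_pow_le. unfold d. lia. }
  assert (Hnext : 1000 * (/ 4) ^ d <= a (S i)).
  { specialize (m_gap i). replace (m (S i)) with (m i + d)%nat in m_gap by (unfold d; lia).
    rewrite pow_add in m_gap. assert (0 < (/ 4) ^ m i) by (apply pow_lt; lra).
    apply Rmult_le_reg_r with ((/ 4) ^ m i); [assumption | lra]. }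
  assert (Hd : (/ 4) ^ d <= / 4)
    by (pose proof (quarter_pow_le 1 d Hd1) as H; simpl in H; lra).
  destruct (scale_spec (S i)) as [_ [H0 | Ha]].
  - unfold scale at 2. rewrite H0. simpl. lra.
  - assert (0 < (/ 4) ^ d) by (apply pow_lt; lra). lra.
Qed.

Section Exceptional.

Variable N : nat.

(* Level [i] is used only when the target around each grid point of mesh
   [4^-(m i)] is a union of cells of the next mesh [4^-(m (S i))]. *)
Definition active i : bool := ((N <=? i) && (m i + depth i <=? m (S i)))%nat.

Definition removed_fraction i : R := if active i then scale i else 0.

Definition step i : nat := (m (S i) - m i)%nat.

Lemma m_S_step i : m (S i) = (m i + step i)%nat.
Proof. pose proof (m_lt i). unfold step. lia. Qed.

(* A cell of mesh [4^-(m (S M))] meets a target of the active level [M] iff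
   its offset inside its parent cell of mesh [4^-(m M)] is below
   [4^(step M - depth M)]. *)
Fixpoint survives (M j : nat) : bool :=
  match M with
  | O => true
  | S M =>
      survives M (j / 4 ^ step M)%nat &&
      (negb (active M) || (4 ^ (step M - depth M) <=? j mod 4 ^ step M)%nat)
  end.

Lemma count_survives_S M :
  INR (count_below (survives (S M)) (4 ^ m (S M))) =
  INR (count_below (survives M) (4 ^ m M)) * 4 ^ step M * (1 - removed_fraction M).
Proof.
  rewrite m_S_step, Nat.pow_add_r. cbn [survives].
  pose proof (count_below_div_mod (survives M)
    (fun r => negb (active M) || (4 ^ (step M - depth M) <=? r)%nat)
    (4 ^ m M) (4 ^ step M) ltac:(apply Nat.pow_nonzero; lia)) as Hcount.
  cbn beta in Hcount. rewrite Hcount.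
  rewrite mult_INR. unfold removed_fraction.
  destruct (active M) eqn:Hact; simpl.
  - assert (Hd : (depth M <= step M)%nat).
    { unfold active in Hact. apply andb_true_iff in Hact as [_ H].
      apply Nat.leb_le in H. unfold step. lia. }
    rewrite count_below_geb by (apply Nat.pow_le_mono_r; lia).
    rewrite minus_INR by (apply Nat.pow_le_mono_r; lia).
    rewrite !INR_pow4. unfold scale.
    replace (step M) with (depth M + (step M - depth M))%nat at 1 3 by lia.
    rewrite pow_add. set (X := INR (count_below (survives M) (4 ^ m M))).
    transitivity (X * (4 ^ depth M * 4 ^ (step M - depth M)
                       - 4 ^ depth M * (/ 4) ^ depth M * 4 ^ (step M - depth M))).
    + rewrite pow4_mul_quarter. ring.
    + ring.
  - rewrite count_below_true, INR_pow4. ring.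
Qed.

Lemma count_survives M :
  INR (count_below (survives (S M)) (4 ^ m (S M))) =
  4 ^ m (S M) * prod_f_R0 (fun i => 1 - removed_fraction i) M.
Proof.
  induction M as [|M IH]; rewrite count_survives_S.
  - change (survives O) with (fun _ : nat => true).
    rewrite count_below_true, INR_pow4, (m_S_step O), pow_add. simpl. ring.
  - rewrite IH, (m_S_step (S M)), pow_add. simpl. ring.
Qed.

Definition avoids_targets_from (t : R) : Prop :=
  forall i, (N <= i)%nat -> ~ dist_grid_le t (m i) ((/ 4) ^ m i * a i).

Lemma survives_of_avoids M t j : avoids_targets_from t ->
  INR j <= INR (4 ^ m M) * t < INR j + 1 -> survives M j = true.
Proof.
  revert j. induction M as [|M IH]; intros j Hav Hj; [reflexivity|].
  cbn [survives]. set (Y := (4 ^ step M)%nat).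
  rewrite (m_S_step M), Nat.pow_add_r, mult_INR in Hj. fold Y in Hj.
  destruct (floor_div_mod Y j (INR (4 ^ m M) * t)) as [Hq Hr].
  { apply Nat.neq_0_lt_0, Nat.pow_nonzero. lia. }
  { replace (INR Y * (INR (4 ^ m M) * t)) with (INR (4 ^ m M) * INR Y * t) by ring.
    exact Hj. }
  rewrite (IH _ Hav Hq). simpl.
  destruct (active M) eqn:Hact; [simpl|reflexivity].
  destruct (Nat.leb_spec (4 ^ (step M - depth M)) (j mod Y)) as [Hc | Hc]; [reflexivity|].
  exfalso. unfold active in Hact. apply andb_true_iff in Hact as [HN Hd].
  apply Nat.leb_le in HN. apply Nat.leb_le in Hd.
  apply (Hav M HN), dist_grid_le_of_cell with (q := (j / Y)%nat).
  rewrite INR_pow4 in Hq, Hr.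
  assert (Hdstep : (depth M <= step M)%nat) by (pose proof (m_S_step M); lia).
  assert (HY : INR Y = 4 ^ depth M * 4 ^ (step M - depth M))
    by (unfold Y; rewrite INR_pow4, <- pow_add; f_equal; lia).
  assert (Hc' : INR (j mod Y) + 1 <= 4 ^ (step M - depth M))
    by (rewrite <- S_INR, <- INR_pow4; apply le_INR; lia).
  assert (Hx : 4 ^ m M * t - INR (j / Y) < scale M).
  { apply lt_quarter_pow_of_mul with (4 ^ (step M - depth M));
      [apply pow_lt; lra | rewrite <- HY; lra]. }
  destruct (scale_spec M) as [Hsa _]. lra.
Qed.

Lemma removed_fraction_bounds i : 0 <= removed_fraction i <= 1.
Proof.
  unfold removed_fraction. destruct (active i); [|lra].
  pose proof (scale_pos i). pose proof (scale_le_1 i). lra.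
Qed.

(* An inactive level [i >= N] carries at most 1/16 of the scale of the next
   level, so the active levels carry a fixed fraction of the divergent sum of
   scales. *)
Lemma sum_removed_fraction_diverges : cv_infty (sum_f_R0 removed_fraction).
Proof.
  set (u i := if (N <=? i)%nat then scale i else 0).
  apply (cv_infty_sum_of_shift_bound u removed_fraction (/ 16) 1); [lra | | |].
  - intros i. unfold u. destruct (N <=? i)%nat; [|lra].
    pose proof (scale_pos i). pose proof (scale_le_1 i). lra.
  - intros i. unfold u, removed_fraction, active.
    assert (0 <= u (S i)) by (unfold u; destruct (N <=? S i)%nat; [left; apply scale_pos | lra]).
    destruct (Nat.leb_spec N i) as [HNi | HNi]; simpl; [|fold (u (S i)); lra].
    rewrite (proj2 (Nat.leb_le N (S i))) by lia.
    destruct (Nat.leb_spec (m i + depth i) (m (S i))) as [_ | Hlt].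
    + pose proof (scale_pos (S i)). lra.
    + pose proof (scale_le_next i Hlt). lra.
  - apply (cv_infty_sum_eventually_eq scale u N); [|exact sum_scale_diverges].
    intros i Hi. unfold u. rewrite (proj2 (Nat.leb_le N i) Hi). reflexivity.
Qed.

Lemma avoiding_set_content_zero :
  content_zero (fun t => 0 <= t < 1 /\ avoids_targets_from t).
Proof.
  intros eps Heps.
  destruct (prod_one_minus_small removed_fraction removed_fraction_bounds
              sum_removed_fraction_diverges (eps / 2)) as [M HM]; [lra|].
  set (Y := (4 ^ m (S M))%nat).
  assert (HY : (0 < Y)%nat) by (apply Nat.neq_0_lt_0, Nat.pow_nonzero; lia).
  assert (HYpos : 0 < INR Y) by (apply lt_0_INR, HY).
  destruct (grid_cells_cover (fun t => 0 <= t < 1 /\ avoids_targets_from t) Y (survives (S M))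
              (eps / (4 * INR Y))) as [l [Hord [Hlen Hcov]]].
  - exact HY.
  - apply Rdiv_lt_0_compat; lra.
  - intros t [Ht _]. exact Ht.
  - intros t j [_ Hav] Hj. exact (survives_of_avoids (S M) t j Hav Hj).
  - exists l. split; [exact Hord | split; [|exact Hcov]].
    rewrite Hlen. set (c := INR (count_below (survives (S M)) Y)).
    assert (Hc : c = INR Y * prod_f_R0 (fun i => 1 - removed_fraction i) M)
      by (unfold c, Y; rewrite count_survives, INR_pow4; reflexivity).
    assert (HcY : c <= INR Y) by (apply le_INR, count_below_le).
    replace (c * (/ INR Y + 2 * (eps / (4 * INR Y))))
      with (prod_f_R0 (fun i => 1 - removed_fraction i) M + c / INR Y * (eps / 2))
      by (rewrite Hc; field; lra).
    assert (c / INR Y <= 1)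
      by (apply Rmult_le_reg_r with (INR Y); [lra|]; unfold Rdiv;
          rewrite Rmult_assoc, Rinv_l; lra).
    assert (0 <= c / INR Y)
      by (apply Rmult_le_pos; [apply pos_INR | left; apply Rinv_0_lt_compat, HYpos]).
    nra.
Qed.

End Exceptional.

End Targets.

Theorem lemma2p3 (a : nat -> R) (m : nat -> nat)
  (ha_pos : forall n, (1 <= n)%nat -> 0 < a n)
  (ha_div : cv_infty (fun N => sum_f_R0 (fun k => a (S k)) N))
  (hm_pos : forall n, (1 <= n)%nat -> (1 <= m n)%nat)
  (hm_inc : forall n, (2 <= n)%nat -> (m (n - 1)%nat < m n)%nat)
  (hm_gap : forall n, (2 <= n)%nat ->
     1000 * (/ 4) ^ (m n) <= a n * (/ 4) ^ (m (n - 1)%nat)) :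
  lebesgue_null (fun t =>
    0 <= t <= 1 /\
    ~ (forall N : nat, exists n : nat,
         (N <= n)%nat /\ (1 <= n)%nat /\
         dist_grid_le t (m n) ((/ 4) ^ (m n) * a n))).
Proof.
  set (a' i := a (S i)). set (m' i := m (S i)).
  assert (a'_pos : forall i, 0 < a' i) by (intros i; apply ha_pos; lia).
  assert (m'_lt : forall i, (m' i < m' (S i))%nat)
    by (intros i; exact (hm_inc (S (S i)) ltac:(lia))).
  assert (m'_gap : forall i, 1000 * (/ 4) ^ m' (S i) <= a' (S i) * (/ 4) ^ m' i)
    by (intros i; exact (hm_gap (S (S i)) ltac:(lia))).
  apply (lebesgue_null_of_content_zero_cover
           (fun N t => 0 <= t < 1 /\ avoids_targets_from a' m' N t)).
  - exact (avoiding_set_content_zero a' m' a'_pos m'_lt m'_gap ha_div).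
  - intros t [[Ht0 Ht1] Hfin]. apply not_all_ex_not in Hfin as [N HN].
    exists N. split; [split; [exact Ht0|]|].
    + destruct Ht1 as [Hlt | ->]; [exact Hlt|]. exfalso. apply HN.
      exists (S N). split; [lia | split; [lia|]].
      (* [t = 1] is itself a grid point. *)
      exists (4 ^ m (S N))%nat. rewrite INR_pow4, pow4_mul_quarter, Rminus_diag, Rabs_R0.
      apply Rmult_le_pos; [apply pow_le; lra | left; apply ha_pos; lia].
    + intros i Hi Hnear. apply HN. exists (S i). split; [lia | split; [lia | exact Hnear]].
Qed.
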